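(* Let $e\in\,]0,1[$ and define $U:[0,1]^2\to[0,1]$ by $$U(x,y)=\begin{cases}1 & \max(x,y)=1,\\ \max(x,y) & x,y\in\,]e,1[,\\ 0 & x,y\in[0,e[,\\ x & y=e,\\ y & x=e,\\ \min(x,y) & \text{otherwise.}\end{cases}$$ Then $U$ is a disjunctive uninorm with neutral element $e$, and for every $\alpha\in\,]0,1[$ with $\alpha\ne e$ the cut $U(\cdot,\alpha)$ is not a continuous function with range $[0,1]$. Consequently, for every continuous fuzzy negation $N$, the function $I(x,y)=U(N(x),y)$ has a unique representation as a $(U,N)$-implication with a continuous fuzzy negation: if $U'$ is a disjunctive uninorm with neutral element in $]0,1[$ and $N'$ is a continuous fuzzy negation with $U'(N'(x),y)=I(x,y)$ for all $x,y$, then $U'=U$ and $N'=N$.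
   Context: A fuzzy negation is a non-increasing map $N:[0,1]\to[0,1]$ with $N(0)=1$, $N(1)=0$. A uninorm is a map $U:[0,1]^2\to[0,1]$ that is commutative, associative, non-decreasing in each variable, and has a neutral element $e\in[0,1]$. A uninorm is disjunctive if $U(1,0)=1$. *)

(* concrete reals R. Functions on [0,1] are modelled as
   functions R -> R (-> R) whose properties are only required on [0,1]. *)
From Stdlib Require Import Reals Lra Bool.
Open Scope R_scope.
Local Open Scope bool_scope.

Definition unit_I (x : R) : Prop := 0 <= x <= 1.

Definition rlt (a b : R) : bool := if Rlt_dec a b then true else false.
Definition rle (a b : R) : bool := if Rle_dec a b then true else false.
Definition req (a b : R) : bool := if Req_EM_T a b then true else false.

Definition fuzzy_negation (N : R -> R) : Prop :=
  (forall x, unit_I x -> unit_I (N x)) /\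
  (forall x y, unit_I x -> unit_I y -> x <= y -> N y <= N x) /\
  N 0 = 1 /\ N 1 = 0.

Definition continuous_on_I (f : R -> R) : Prop :=
  forall x, unit_I x -> forall eps, 0 < eps ->
    exists delta, 0 < delta /\
      forall y, unit_I y -> Rabs (y - x) < delta -> Rabs (f y - f x) < eps.

Definition uninorm (U : R -> R -> R) (e : R) : Prop :=
  unit_I e /\
  (forall x y, unit_I x -> unit_I y -> unit_I (U x y)) /\
  (forall x y, unit_I x -> unit_I y -> U x y = U y x) /\
  (forall x y z, unit_I x -> unit_I y -> unit_I z -> U x (U y z) = U (U x y) z) /\
  (forall x1 x2 y, unit_I x1 -> unit_I x2 -> unit_I y -> x1 <= x2 -> U x1 y <= U x2 y) /\
  (forall x y1 y2, unit_I x -> unit_I y1 -> unit_I y2 -> y1 <= y2 -> U x y1 <= U x y2) /\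
  (forall x, unit_I x -> U e x = x /\ U x e = x).

Definition disjunctive_uninorm (U : R -> R -> R) (e : R) : Prop :=
  uninorm U e /\ U 1 0 = 1.

Definition Uex (e x y : R) : R :=
  if req (Rmax x y) 1 then 1
  else if rlt e x && rlt x 1 && rlt e y && rlt y 1 then Rmax x y
  else if rle 0 x && rlt x e && rle 0 y && rlt y e then 0
  else if req y e then x
  else if req x e then y
  else Rmin x y.

(* U is built from the minimum and maximum, so all uninorm axioms reduce to a
   finite case analysis on the relative position of x, y, z, e, 0 and 1.
   For alpha <> e the cut U(., alpha) never takes the value e, so it is not
   onto [0,1]. In a representation U'(N' x, y) = U(N x, y) the neutral
   element e' of U' gives N' x = U(N x, e'); a continuous negation N' is onto
   [0,1] by the intermediate value theorem, so N' takes the value e, forcing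
   e' = e and then N' = N; finally U' = U because N is onto as well. *)
From Stdlib Require Import Reals Lra.
Open Scope R_scope.

(* Destructing only innermost decisions lets [cbv] reduce the enclosing
   boolean tests before the next split, which keeps the case tree small. *)
Ltac no_decision t := match t with
  | context[Rle_dec _ _] => fail 1 | context[Rlt_dec _ _] => fail 1
  | context[Req_EM_T _ _] => fail 1 | _ => idtac end.
Ltac destruct_decision := match goal with
  | |- context[Rle_dec ?a ?b] => no_decision a; no_decision b; destruct (Rle_dec a b)
  | |- context[Rlt_dec ?a ?b] => no_decision a; no_decision b; destruct (Rlt_dec a b)
  | |- context[Req_EM_T ?a ?b] => no_decision a; no_decision b; destruct (Req_EM_T a b)
  end.
Ltac Uex_cases := unfold unit_I, Uex, req, rlt, rle, Rmax, Rmin in *;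
  repeat (destruct_decision; cbv beta iota delta [andb]; try (exfalso; lra));
  try lra.

Section UexUninorm.

Variable e : R.
Hypothesis he : 0 < e < 1.

Lemma Uex_in_I x y : unit_I x -> unit_I y -> unit_I (Uex e x y).
Proof. intros; Uex_cases. Qed.

Lemma Uex_comm x y : unit_I x -> unit_I y -> Uex e x y = Uex e y x.
Proof. intros; Uex_cases. Qed.

Lemma Uex_assoc x y z : unit_I x -> unit_I y -> unit_I z ->
  Uex e x (Uex e y z) = Uex e (Uex e x y) z.
Proof. intros; Uex_cases. Qed.

Lemma Uex_monotone_l x1 x2 y : unit_I x1 -> unit_I x2 -> unit_I y -> x1 <= x2 ->
  Uex e x1 y <= Uex e x2 y.
Proof. intros; Uex_cases. Qed.

Lemma Uex_monotone_r x y1 y2 : unit_I x -> unit_I y1 -> unit_I y2 -> y1 <= y2 ->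
  Uex e x y1 <= Uex e x y2.
Proof.
  intros Hx Hy1 Hy2 Hle.
  rewrite (Uex_comm x y1), (Uex_comm x y2) by assumption.
  now apply Uex_monotone_l.
Qed.

Lemma Uex_neutral x : unit_I x -> Uex e e x = x /\ Uex e x e = x.
Proof. intros; split; Uex_cases. Qed.

Lemma Uex_1_0 : Uex e 1 0 = 1.
Proof. Uex_cases. Qed.

Lemma Uex_disjunctive_uninorm : disjunctive_uninorm (Uex e) e.
Proof.
  split; [| exact Uex_1_0].
  repeat split; unfold unit_I in *; try lra.
  - now apply Uex_in_I.
  - now apply Uex_in_I.
  - now apply Uex_comm.
  - now apply Uex_assoc.
  - now apply Uex_monotone_l.
  - now apply Uex_monotone_r.
  - now apply Uex_neutral.
  - now apply Uex_neutral.
Qed.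

Lemma Uex_neq_neutral x a : 0 < a < 1 -> a <> e -> unit_I x -> Uex e x a <> e.
Proof. intros; Uex_cases. Qed.

End UexUninorm.

Definition clamp_I (x : R) : R := Rmax 0 (Rmin 1 x).

Lemma clamp_I_in_I x : unit_I (clamp_I x).
Proof. unfold clamp_I, unit_I, Rmax, Rmin; repeat destruct_decision; lra. Qed.

Lemma clamp_I_id x : unit_I x -> clamp_I x = x.
Proof. unfold clamp_I, unit_I, Rmax, Rmin; intros; repeat destruct_decision; lra. Qed.

Lemma clamp_I_1_lipschitz x y : Rabs (clamp_I y - clamp_I x) <= Rabs (y - x).
Proof.
  unfold clamp_I, Rmax, Rmin, Rabs.
  repeat destruct_decision; repeat destruct Rcase_abs; lra.
Qed.

Lemma continuous_on_I_clamp (f : R -> R) :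
  continuous_on_I f -> continuity (fun x => f (clamp_I x)).
Proof.
  intros Hf x eps Heps.
  destruct (Hf (clamp_I x) (clamp_I_in_I x) eps Heps) as [d [Hd Hfd]].
  exists d; split; [exact Hd |].
  intros y [_ Hy]; simpl in *; unfold R_dist in *.
  apply Hfd; [apply clamp_I_in_I |].
  exact (Rle_lt_trans _ _ _ (clamp_I_1_lipschitz x y) Hy).
Qed.

Lemma continuous_on_I_IVT (f : R -> R) (z : R) :
  continuous_on_I f -> Rmin (f 0) (f 1) <= z <= Rmax (f 0) (f 1) ->
  exists x, unit_I x /\ f x = z.
Proof.
  intros Hf Hz.
  set (g := fun x => f (clamp_I x) - z).
  assert (Hg : continuity g).
  { apply continuity_minus; [exact (continuous_on_I_clamp f Hf) |].
    apply continuity_const; now intros a b. }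
  assert (H0 : g 0 = f 0 - z) by (unfold g; now rewrite clamp_I_id by (unfold unit_I; lra)).
  assert (H1 : g 1 = f 1 - z) by (unfold g; now rewrite clamp_I_id by (unfold unit_I; lra)).
  assert (Hsign : g 0 * g 1 <= 0).
  { rewrite H0, H1; revert Hz; unfold Rmin, Rmax.
    destruct (Rle_dec (f 0) (f 1)); intros; nra. }
  destruct (IVT_cor g 0 1 Hg ltac:(lra) Hsign) as [x [Hx Hgx]].
  exists x; split; [exact Hx |].
  unfold g in Hgx; rewrite clamp_I_id in Hgx by exact Hx; lra.
Qed.

Lemma continuous_negation_onto (N : R -> R) :
  fuzzy_negation N -> continuous_on_I N ->
  forall z, unit_I z -> exists x, unit_I x /\ N x = z.
Proof.
  intros (_ & _ & HN0 & HN1) HNc z Hz.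
  apply continuous_on_I_IVT; [exact HNc |].
  rewrite HN0, HN1, Rmin_right, Rmax_left by lra; unfold unit_I in Hz; lra.
Qed.

Lemma implication_negation (U : R -> R -> R) (e : R) (N : R -> R) (I : R -> R -> R) :
  uninorm U e -> (forall x y, unit_I x -> unit_I y -> U (N x) y = I x y) ->
  (forall x, unit_I x -> unit_I (N x)) ->
  forall x, unit_I x -> N x = I x e.
Proof.
  intros (HeI & _ & _ & _ & _ & _ & Hneutral) HUN HNI x Hx.
  rewrite <- HUN by assumption.
  symmetry; now apply Hneutral, HNI.
Qed.

Lemma implication_uninorm_unique (U U' : R -> R -> R) (N : R -> R) :
  (forall z, unit_I z -> exists x, unit_I x /\ N x = z) ->
  (forall x y, unit_I x -> unit_I y -> U' (N x) y = U (N x) y) ->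
  forall x y, unit_I x -> unit_I y -> U' x y = U x y.
Proof.
  intros Honto HUU' x y Hx Hy.
  destruct (Honto x Hx) as [t [Ht <-]].
  now apply HUU'.
Qed.

Theorem mainTheorem6 (e : R) (he : 0 < e < 1) :
  disjunctive_uninorm (Uex e) e /\
  (forall alpha, 0 < alpha < 1 -> alpha <> e ->
     ~ (continuous_on_I (fun x => Uex e x alpha) /\
        forall z, unit_I z -> exists x, unit_I x /\ Uex e x alpha = z)) /\
  (forall N : R -> R, fuzzy_negation N -> continuous_on_I N ->
     forall (U' : R -> R -> R) (e' : R) (N' : R -> R),
       disjunctive_uninorm U' e' -> 0 < e' < 1 ->
       fuzzy_negation N' -> continuous_on_I N' ->
       (forall x y, unit_I x -> unit_I y -> U' (N' x) y = Uex e (N x) y) ->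
       (forall x y, unit_I x -> unit_I y -> U' x y = Uex e x y) /\
       (forall x, unit_I x -> N' x = N x)).
Proof.
  split; [exact (Uex_disjunctive_uninorm e he) |]. split.
  - intros a Ha Hae [_ Honto].
    destruct (Honto e ltac:(unfold unit_I; lra)) as [x [Hx Hxe]].
    exact (Uex_neq_neutral e he x a Ha Hae Hx Hxe).
  - intros N HN HNc U' e' N' [HU' _] He' HN' HN'c HI.
    assert (HNI : forall x, unit_I x -> unit_I (N x)) by apply HN.
    assert (HN'I : forall x, unit_I x -> unit_I (N' x)) by apply HN'.
    pose proof (implication_negation U' e' N' _ HU' HI HN'I) as HN'eq.
    assert (He'e : e' = e).
    { destruct (Req_EM_T e' e) as [| Hne]; [assumption | exfalso].
      destruct (continuous_negation_onto N' HN' HN'c e ltac:(unfold unit_I; lra))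
        as [x [Hx Hxe]].
      rewrite HN'eq in Hxe by exact Hx.
      exact (Uex_neq_neutral e he (N x) e' He' Hne (HNI x Hx) Hxe). }
    subst e'.
    assert (HNN : forall x, unit_I x -> N' x = N x).
    { intros x Hx; rewrite HN'eq by exact Hx; now apply Uex_neutral, HNI. }
    split; [| exact HNN].
    apply (implication_uninorm_unique _ _ N (continuous_negation_onto N HN HNc)).
    intros x y Hx Hy; rewrite <- HI by assumption; now rewrite HNN.
Qed.
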